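(* Let $X$ and $Y$ be uniform spaces and $f\colon X\to Y$ a function that generates the uniform structure on $Y$. Then $f$ is a uniform covering map if and only if $X$ has a base of entourages $E$ such that $E$ evenly covers $f(E)$.
   Context: A uniform structure on a set $X$ is a filter $\mathcal{E}$ of symmetric subsets (entourages) of $X\times X$ containing the diagonal such that every $G_1\in\mathcal{E}$ admits $G\in\mathcal{E}$ with $G^2\subset G_1$, where $G^2=\{(x,z):\exists y,\ (x,y),(y,z)\in G\}$. For $x\in X$ and an entourage $E$, $B(x,E)=\{y:(x,y)\in E\}$. For a function $f\colon X\to Y$ and $E\subset X\times X$, $f(E)=\{(f(x),f(y)):(x,y)\in E\}$. A surjection $f\colon X\to Y$ from a uniform space generates the uniform structure on $Y$ if $\{f(E)\}_E$, $E$ ranging over entourages of $X$, is a base of the uniform structure of $Y$. For a symmetric $E\subset X\times X$ containing the diagonal, the Rips complex $R(X,E)$ is the simplicial complex (weak topology) with vertex set $X$ whose simplices are the finite sets $F\subset X$ with $F\times F\subset E$; $f$ induces the simplicial map $f_E\colon R(X,E)\to R(Y,f(E))$, $\sum t_ix_i\mapsto\sum t_if(x_i)$. A simplicial covering map is a simplicial map that is a topological covering map. $f\colon X\to Y$ is a uniform covering map if it generates the uniform structure on $Y$ and the entourages $E$ of $X$ for which $f_E\colon R(X,E)\to R(Y,f(E))$ is a simplicial covering map form a base of the uniform structure of $X$. A symmetric $E\subset X\times X$ evenly covers $f(E)$ if for every $x\in X$, $f$ maps $B(x,E)$ bijectively onto $B(f(x),f(E))$. *)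

From Stdlib Require Import Reals List ClassicalEpsilon.
Open Scope R_scope.

Definition rel (X : Type) := X -> X -> Prop.

Definition subrel {X} (E F : rel X) : Prop := forall x y, E x y -> F x y.
Definition symmetric_rel {X} (E : rel X) : Prop := forall x y, E x y -> E y x.
Definition has_diag {X} (E : rel X) : Prop := forall x, E x x.
Definition rel_square {X} (G : rel X) : rel X :=
  fun x z => exists y, G x y /\ G y z.

(** A uniform structure: a filter [U] of symmetric relations containing the
    diagonal (filter taken within symmetric subsets of X x X), such that
    every member G1 admits a member G with G^2 inside G1. *)
Record uniformity (X : Type) := Uniformity {
  ent : rel X -> Prop;
  ent_full : ent (fun _ _ => True);
  ent_sym : forall E, ent E -> symmetric_rel E;
  ent_diag : forall E, ent E -> has_diag E;
  ent_up : forall E F, ent E -> symmetric_rel F -> subrel E F -> ent F;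
  ent_inter : forall E F, ent E -> ent F -> ent (fun x y => E x y /\ F x y);
  ent_half : forall G1, ent G1 -> exists G, ent G /\ subrel (rel_square G) G1
}.
Arguments ent {X} u E.

Definition img_rel {X Y} (f : X -> Y) (E : rel X) : rel Y :=
  fun a b => exists x y, E x y /\ f x = a /\ f y = b.

Definition ball {X} (E : rel X) (x : X) : X -> Prop := fun y => E x y.

Definition is_base {X} (U : uniformity X) (P : rel X -> Prop) : Prop :=
  (forall E, P E -> ent U E) /\
  (forall G, ent U G -> exists E, P E /\ subrel E G).

Definition generates {X Y} (UX : uniformity X) (UY : uniformity Y) (f : X -> Y) : Prop :=
  (forall y, exists x, f x = y) /\
  (forall E, ent UX E -> ent UY (img_rel f E)) /\
  (forall G, ent UY G -> exists E, ent UX E /\ subrel (img_rel f E) G).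

Definition evenly_covers {X Y} (f : X -> Y) (E : rel X) : Prop :=
  forall x,
    (forall y, ball E x y -> ball (img_rel f E) (f x) (f y)) /\
    (forall y1 y2, ball E x y1 -> ball E x y2 -> f y1 = f y2 -> y1 = y2) /\
    (forall b, ball (img_rel f E) (f x) b -> exists y, ball E x y /\ f y = b).

Definition lsum (l : list R) : R := fold_right Rplus 0 l.

Definition is_simplex {V} (E : rel V) (s : list V) : Prop :=
  forall a b, In a s -> In b s -> E a b.

(** Points of |R(V,E)|: barycentric coordinate functions t : V -> R,
    nonnegative, whose support is a finite simplex, with coordinates summing to 1. *)
Definition rips_pt {V} (E : rel V) (t : V -> R) : Prop :=
  (forall v, 0 <= t v) /\
  exists l : list V, NoDup l /\ (forall v, In v l <-> t v <> 0) /\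
    is_simplex E l /\ lsum (map t l) = 1.

Definition supp_in {V} (t : V -> R) (s : list V) : Prop :=
  forall v, t v <> 0 -> In v s.

(** Open sets of the weak topology on |R(V,E)|: a set of points whose trace on
    every closed simplex |s| is open in |s| (Euclidean topology of |s|). *)
Definition weak_open {V} (E : rel V) (U : (V -> R) -> Prop) : Prop :=
  (forall t, U t -> rips_pt E t) /\
  forall s, is_simplex E s -> forall t, U t -> supp_in t s ->
    exists eps, 0 < eps /\
      forall u, rips_pt E u -> supp_in u s ->
        (forall v, In v s -> Rabs (u v - t v) < eps) -> U u.

Definition supp_list {V} (t : V -> R) : list V :=
  epsilon (inhabits nil) (fun l => NoDup l /\ forall v, In v l <-> t v <> 0).

(** The induced simplicial map  sum t_i x_i |-> sum t_i f(x_i). *)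
Definition push {X Y} (f : X -> Y) (t : X -> R) : Y -> R :=
  fun y => lsum (map (fun v => if excluded_middle_informative (f v = y) then t v else 0)
                     (supp_list t)).

(** Topological covering map p : A -> B between spaces given by carrier
    predicates and families of open sets (open sets are subsets of carriers):
    p is continuous and every point of B has an open neighbourhood U whose
    preimage is a disjoint union of open sets each mapped homeomorphically onto U. *)
Definition covering_map {A B} (PA : A -> Prop) (openA : (A -> Prop) -> Prop)
  (PB : B -> Prop) (openB : (B -> Prop) -> Prop) (p : A -> B) : Prop :=
  (forall a, PA a -> PB (p a)) /\
  (forall W, openB W -> openA (fun a => PA a /\ W (p a))) /\
  forall b, PB b -> exists U : B -> Prop, openB U /\ U b /\
    exists Sh : (A -> Prop) -> Prop,
      (forall S, Sh S -> openA S) /\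
      (forall S1 S2, Sh S1 -> Sh S2 -> (exists a, S1 a /\ S2 a) ->
                     forall a, S1 a <-> S2 a) /\
      (forall a, PA a -> U (p a) -> exists S, Sh S /\ S a) /\
      (forall S a, Sh S -> S a -> U (p a)) /\
      (forall S, Sh S ->
         (forall a1 a2, S a1 -> S a2 -> p a1 = p a2 -> a1 = a2) /\
         (forall u, U u -> exists a, S a /\ p a = u) /\
         (forall W, openA W -> openB (fun b => exists a, W a /\ S a /\ p a = b))).

Definition rips_covering {X Y} (f : X -> Y) (E : rel X) : Prop :=
  covering_map (rips_pt E) (weak_open E)
               (rips_pt (img_rel f E)) (weak_open (img_rel f E)) (push f).

Definition uniform_covering {X Y} (UX : uniformity X) (UY : uniformity Y) (f : X -> Y) : Prop :=
  generates UX UY f /\ is_base UX (fun E => ent UX E /\ rips_covering f E).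

(** Covering => evenly covering: a covering map is a local homeomorphism, so
    the vertex x has an open neighbourhood S on which f_E is injective and open.
    Points of an edge [x,y] close to x lie in S, so injectivity of f_E on S
    yields injectivity of f on B(x,E); openness of f_E on the open star of x
    forces f_E(S) to contain points of the edge [f x, b] for b in B(f x, f(E)),
    and a preimage of such a point exhibits a lift of b in B(x,E).

    Evenly covering => covering: if f is injective and surjective on the balls
    of F, and moreover "ball simplicial" (two points of a ball whose images are
    f(F)-close are F-close), then the open star of a vertex y of R(Y,f(F)) is
    evenly covered by the open stars of the vertices of f^{-1}(y); the inverse
    of f_F on such a star lifts barycentric coordinates through the ball.  The
    ball-simplicial condition holds when F^2 lies in an evenly covering
    entourage, which is why the main theorem passes to a square root of an
    evenly covering entourage before choosing F. *)

From Stdlib Require Import Reals List Permutation ClassicalEpsilon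
  FunctionalExtensionality Lra Classical.
Open Scope R_scope.

Lemma lsum_perm (l1 l2 : list R) : Permutation l1 l2 -> lsum l1 = lsum l2.
Proof. induction 1; simpl; lra. Qed.

Lemma lsum_zero {V} (g : V -> R) (l : list V) :
  (forall u, In u l -> g u = 0) -> lsum (map g l) = 0.
Proof.
  induction l as [|a l IH]; simpl; intros H; [reflexivity|].
  rewrite H, IH; auto; lra.
Qed.

Lemma lsum_one {V} (g : V -> R) (l : list V) (v : V) : NoDup l -> In v l ->
  (forall u, In u l -> u <> v -> g u = 0) -> lsum (map g l) = g v.
Proof.
  induction l as [|a l IH]; simpl; intros Hnd Hin H; [contradiction|].
  inversion Hnd; subst.
  destruct (classic (a = v)) as [<-|Hav].
  - rewrite lsum_zero; [lra|]. intros u Hu. apply H; auto.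
    intros ->; contradiction.
  - rewrite H, IH; auto; [lra|]. destruct Hin; [congruence|auto].
Qed.

Lemma lsum_nz {V} (g : V -> R) (l : list V) :
  lsum (map g l) <> 0 -> exists u, In u l /\ g u <> 0.
Proof.
  intros H. apply NNPP; intro Hno. apply H, lsum_zero.
  intros u Hu. apply NNPP; intro. apply Hno; eauto.
Qed.

Lemma push_eq {X Y} (f : X -> Y) (t : X -> R) (l : list X) (z : Y) :
  NoDup l -> (forall v, In v l <-> t v <> 0) ->
  push f t z =
  lsum (map (fun v => if excluded_middle_informative (f v = z) then t v else 0) l).
Proof.
  intros Hnd Hl.
  assert (Hs : NoDup (supp_list t) /\ forall v, In v (supp_list t) <-> t v <> 0).
  { unfold supp_list. apply epsilon_spec. exists l. auto. }
  destruct Hs as [Hsnd Hsl].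
  unfold push. apply lsum_perm, Permutation_map, NoDup_Permutation; auto.
  intro v. rewrite Hsl, Hl. tauto.
Qed.

Lemma push_nz {X Y} (f : X -> Y) (E : rel X) (t : X -> R) (z : Y) :
  rips_pt E t -> push f t z <> 0 -> exists v, t v <> 0 /\ f v = z.
Proof.
  intros [_ [l [Hnd [Hl _]]]] H.
  rewrite (push_eq f t l z Hnd Hl) in H.
  destruct (lsum_nz _ l H) as [u [_ Hu]].
  destruct excluded_middle_informative as [Hfu|]; [|lra].
  exists u. auto.
Qed.

Lemma rips_nonempty {V} (E : rel V) (t : V -> R) :
  rips_pt E t -> exists y, 0 < t y.
Proof.
  intros [Hnn [l [_ [_ [_ Hsum]]]]].
  destruct (lsum_nz t l) as [u [_ Hu]]; [rewrite Hsum; lra|].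
  exists u. specialize (Hnn u). lra.
Qed.

Lemma rips_supp_adjacent {V} (E : rel V) (t : V -> R) (x v : V) :
  rips_pt E t -> t x <> 0 -> t v <> 0 -> E x v.
Proof. intros [_ [l [_ [Hl [Hs _]]]]] Hx Hv. apply Hs; apply Hl; auto. Qed.

Definition star {V} (E : rel V) (x : V) : (V -> R) -> Prop :=
  fun t => rips_pt E t /\ 0 < t x.

Lemma star_open {V} (E : rel V) (x : V) : weak_open E (star E x).
Proof.
  split; [intros t [Ht _]; exact Ht|].
  intros s _ t [_ Htx] Hts. exists (t x). split; [exact Htx|].
  intros u Hu _ Hclose. split; [exact Hu|].
  assert (Hx : In x s) by (apply Hts; lra).
  specialize (Hclose x Hx). apply Rabs_def2 in Hclose. lra.
Qed.

(** The point (1-e) x + e y of the edge [x,y]; for [e = 0] it is the vertex [x]. *)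
Definition edge_pt {V} (x y : V) (e : R) : V -> R := fun v =>
  (if excluded_middle_informative (x = v) then 1 - e else 0) +
  (if excluded_middle_informative (y = v) then e else 0).

Lemma edge_pt_degenerate_supp {V} (x y : V) (e : R) : (x = y \/ e = 0) -> e < 1 ->
  forall v, In v (x :: nil) <-> edge_pt x y e v <> 0.
Proof.
  intros H He v. unfold edge_pt; simpl.
  destruct H as [<-| ->]; repeat destruct excluded_middle_informative;
    subst; intuition lra.
Qed.

Lemma edge_pt_proper_supp {V} (x y : V) (e : R) : x <> y -> 0 < e < 1 ->
  forall v, In v (x :: y :: nil) <-> edge_pt x y e v <> 0.
Proof.
  intros H He v. unfold edge_pt; simpl.
  repeat destruct excluded_middle_informative; subst; try congruence; intuition lra.
Qed.

Lemma edge_rips {V} (E : rel V) (x y : V) (e : R) :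
  is_simplex E (x :: y :: nil) -> 0 <= e < 1 -> rips_pt E (edge_pt x y e).
Proof.
  intros Hs He. split.
  { intro v. unfold edge_pt. repeat destruct excluded_middle_informative; lra. }
  destruct (classic (x = y \/ e = 0)) as [H|H].
  - exists (x :: nil). split; [repeat constructor; simpl; tauto|].
    split; [apply edge_pt_degenerate_supp; auto; lra|].
    split; [intros a b [<-|[]] [<-|[]]; apply Hs; simpl; auto|].
    simpl. unfold edge_pt. destruct H as [<-| ->];
      repeat destruct excluded_middle_informative; try congruence; lra.
  - assert (Hxy : x <> y) by tauto. assert (He0 : e <> 0) by tauto.
    exists (x :: y :: nil).
    split; [repeat constructor; simpl; intuition|].
    split; [apply edge_pt_proper_supp; auto; lra|].
    split; [exact Hs|].
    simpl. unfold edge_pt.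
    repeat destruct excluded_middle_informative; try congruence; lra.
Qed.

Lemma push_edge {X Y} (f : X -> Y) (x y : X) (e : R) : 0 <= e < 1 ->
  push f (edge_pt x y e) = edge_pt (f x) (f y) e.
Proof.
  intros He. extensionality z.
  destruct (classic (x = y \/ e = 0)) as [H|H].
  - rewrite (push_eq f _ (x :: nil)).
    2: repeat constructor; simpl; tauto.
    2: apply edge_pt_degenerate_supp; auto; lra.
    simpl. unfold edge_pt. destruct H as [<-| ->];
      repeat destruct excluded_middle_informative; subst; try congruence; lra.
  - assert (Hxy : x <> y) by tauto. assert (He0 : e <> 0) by tauto.
    rewrite (push_eq f _ (x :: y :: nil)).
    2: repeat constructor; simpl; intuition.
    2: apply edge_pt_proper_supp; auto; lra.
    simpl. unfold edge_pt.
    repeat destruct excluded_middle_informative; subst; try congruence; lra.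
Qed.

Lemma edge_pt_inj {V} (x y1 y2 : V) (e : R) : 0 < e < 1 ->
  edge_pt x y1 e = edge_pt x y2 e -> y1 = y2.
Proof.
  intros He Heq. apply NNPP; intro Hne.
  destruct (classic (y1 = x)) as [Hx|Hx].
  - assert (Hv := equal_f Heq y2). unfold edge_pt in Hv.
    repeat destruct excluded_middle_informative; subst; try congruence; lra.
  - assert (Hv := equal_f Heq y1). unfold edge_pt in Hv.
    repeat destruct excluded_middle_informative; subst; try congruence; lra.
Qed.

Lemma weak_open_edge {V} (E : rel V) (W : (V -> R) -> Prop) (x y : V) :
  weak_open E W -> W (edge_pt x x 0) -> is_simplex E (x :: y :: nil) ->
  exists eps, 0 < eps <= 1 /\ forall e, 0 < e < eps -> W (edge_pt x y e).
Proof.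
  intros [_ HW] Hx Hs.
  destruct (HW _ Hs _ Hx) as [eps [Heps Hnear]].
  { intros v Hv. unfold edge_pt in Hv. simpl.
    repeat destruct excluded_middle_informative; auto; lra. }
  exists (Rmin eps 1).
  assert (Hm1 := Rmin_l eps 1). assert (Hm2 := Rmin_r eps 1).
  assert (Hm : 0 < Rmin eps 1) by (apply Rmin_glb_lt; lra).
  split; [lra|]. intros e He. apply Hnear.
  - apply edge_rips; auto; lra.
  - intros v Hv. unfold edge_pt in Hv. simpl.
    repeat destruct excluded_middle_informative; auto; lra.
  - intros v _. unfold edge_pt.
    repeat destruct excluded_middle_informative; subst; apply Rabs_def1; lra.
Qed.

(** ** Covering maps of Rips complexes give evenly covering entourages *)

Definition local_sheet {X Y} (f : X -> Y) (E : rel X)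
    (a : X -> R) (S : (X -> R) -> Prop) : Prop :=
  S a /\ weak_open E S /\
  (forall a1 a2, S a1 -> S a2 -> push f a1 = push f a2 -> a1 = a2) /\
  (forall W, weak_open E W ->
     weak_open (img_rel f E) (fun b => exists a, W a /\ S a /\ push f a = b)).

Lemma covering_local_sheet {X Y} (f : X -> Y) (E : rel X) (a : X -> R) :
  rips_covering f E -> rips_pt E a -> exists S, local_sheet f E a S.
Proof.
  intros [Hpt [_ Hloc]] Ha.
  destruct (Hloc (push f a) (Hpt a Ha))
    as [U [_ [HUa [Sh [HSo [_ [Hcov [_ Hsheet]]]]]]]].
  destruct (Hcov a Ha HUa) as [S [HS HSa]].
  destruct (Hsheet S HS) as [Hinj [_ Hopen]].
  exists S. split; [exact HSa|]. split; [apply HSo, HS|]. split; assumption.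
Qed.

Section CoveringToEvenlyCovering.

Variables (X Y : Type) (f : X -> Y) (E : rel X).
Hypotheses (E_sym : symmetric_rel E) (E_diag : has_diag E).

Lemma edge_simplex (x y : X) : E x y -> is_simplex E (x :: y :: nil).
Proof.
  intros Hxy a b [<-|[<-|[]]] [<-|[<-|[]]]; auto.
Qed.

Lemma sheet_ball_injective (x : X) (S : (X -> R) -> Prop) :
  local_sheet f E (edge_pt x x 0) S ->
  forall y1 y2, E x y1 -> E x y2 -> f y1 = f y2 -> y1 = y2.
Proof.
  intros [HSx [HSo [Hinj _]]] y1 y2 H1 H2 Hf.
  destruct (weak_open_edge E S x y1 HSo HSx (edge_simplex x y1 H1))
    as [e1 [He1 Hnear1]].
  destruct (weak_open_edge E S x y2 HSo HSx (edge_simplex x y2 H2))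
    as [e2 [He2 Hnear2]].
  set (e := Rmin e1 e2 / 2).
  assert (Hm1 := Rmin_l e1 e2). assert (Hm2 := Rmin_r e1 e2).
  assert (Hm : 0 < Rmin e1 e2) by (apply Rmin_glb_lt; lra).
  apply (edge_pt_inj x y1 y2 e); [unfold e; lra|].
  apply Hinj; [apply Hnear1 | apply Hnear2 |]; try (unfold e; lra).
  rewrite !push_edge by (unfold e; lra). rewrite Hf. reflexivity.
Qed.

Lemma sheet_ball_surjective (x : X) (S : (X -> R) -> Prop) :
  local_sheet f E (edge_pt x x 0) S ->
  forall b, img_rel f E (f x) b -> exists y, E x y /\ f y = b.
Proof.
  intros [HSx [_ [_ Hopen]]] b Hb.
  destruct (classic (b = f x)) as [->|Hbx]; [exists x; auto|].
  (* the image of the open star of x under the sheet is open and contains f x *)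
  set (V := fun c => exists a, star E x a /\ S a /\ push f a = c).
  assert (HVx : V (edge_pt (f x) (f x) 0)).
  { exists (edge_pt x x 0). split; [|split; [exact HSx | apply push_edge; lra]].
    split; [apply edge_rips; [apply edge_simplex; auto | lra]|].
    unfold edge_pt. repeat destruct excluded_middle_informative; try congruence; lra. }
  assert (Hs : is_simplex (img_rel f E) (f x :: b :: nil)).
  { destruct Hb as [x' [y' [Hxy [Hfx Hfy]]]].
    intros a c [<-|[<-|[]]] [<-|[<-|[]]].
    - exists x, x; auto.
    - exists x', y'; auto.
    - exists y', x'; auto.
    - exists y', y'; auto. }
  destruct (weak_open_edge _ V (f x) b (Hopen _ (star_open E x)) HVx Hs)
    as [eps [Heps Hnear]].
  destruct (Hnear (eps / 2)) as [a [[Ha Hax] [_ Hpa]]]; [lra|].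
  (* the preimage a of a point of the edge [f x, b] has a vertex over b *)
  assert (Hpb : push f a b <> 0).
  { rewrite Hpa. unfold edge_pt.
    repeat destruct excluded_middle_informative; try congruence; lra. }
  destruct (push_nz f E a b Ha Hpb) as [u [Hu Hfu]].
  exists u. split; [apply (rips_supp_adjacent E a); auto; lra | exact Hfu].
Qed.

Lemma rips_covering_evenly_covers : rips_covering f E -> evenly_covers f E.
Proof.
  intros Hcov x.
  destruct (covering_local_sheet f E (edge_pt x x 0) Hcov)
    as [S HS]; [apply edge_rips; [apply edge_simplex; auto | lra]|].
  split; [|split].
  - intros y Hy. exists x, y. auto.
  - apply (sheet_ball_injective x S HS).
  - apply (sheet_ball_surjective x S HS).
Qed.

End CoveringToEvenlyCovering.

(** ** Local conditions on balls making [f_F] a covering map *)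

Definition ball_injective {X Y} (f : X -> Y) (F : rel X) : Prop :=
  forall x y1 y2, F x y1 -> F x y2 -> f y1 = f y2 -> y1 = y2.

Definition ball_surjective {X Y} (f : X -> Y) (F : rel X) : Prop :=
  forall x b, img_rel f F (f x) b -> exists y, F x y /\ f y = b.

Definition ball_simplicial {X Y} (f : X -> Y) (F : rel X) : Prop :=
  forall x u w, F x u -> F x w -> img_rel f F (f u) (f w) -> F u w.

Lemma evenly_covers_iff {X Y} (f : X -> Y) (F : rel X) :
  evenly_covers f F <-> ball_injective f F /\ ball_surjective f F.
Proof.
  split.
  - intros Hev. split; intros x; apply (Hev x).
  - intros [Hinj Hsurj] x. split; [|split].
    + intros y Hy. exists x, y. auto.
    + apply Hinj.
    + apply Hsurj.
Qed.

Lemma evenly_covers_square_simplicial {X Y} (f : X -> Y) (F E : rel X) :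
  evenly_covers f F -> evenly_covers f E -> symmetric_rel F -> has_diag F ->
  subrel (rel_square F) E -> ball_simplicial f F.
Proof.
  intros HF HE Hsym Hdiag Hsq x u w Hxu Hxw Hfuw.
  destruct (proj2 (proj2 (HF u)) (f w) Hfuw) as [z [Huz Hfz]].
  assert (Hzw : z = w).
  { apply (proj1 (proj2 (HE u))); [| |exact Hfz]; apply Hsq.
    - exists u. auto.
    - exists x. auto. }
  subst z. exact Huz.
Qed.

Section EvenlyCoveringToCovering.

Variables (X Y : Type) (f : X -> Y) (F : rel X).
Hypotheses (F_inj : ball_injective f F) (F_surj : ball_surjective f F)
  (F_simp : ball_simplicial f F) (F_diag : has_diag F).

(** [f_F] preserves the coordinate of a vertex [v] whenever all of the support
    together with [v] lies in one ball, where [f] is injective. *)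
Lemma push_val_near (t : X -> R) (x v : X) :
  rips_pt F t -> F x v -> (forall w, t w <> 0 -> F x w) -> push f t (f v) = t v.
Proof.
  intros [_ [l [Hnd [Hl _]]]] Hxv Hnear.
  assert (Hfib : forall w, t w <> 0 -> f w = f v -> w = v)
    by (intros w Hw Hfw; apply (F_inj x); auto).
  rewrite (push_eq f t l _ Hnd Hl).
  destruct (classic (t v = 0)) as [H0|H0].
  - rewrite H0. apply lsum_zero. intros u Hu.
    destruct excluded_middle_informative as [Hfu|]; [|reflexivity].
    apply NNPP; intro Htu. apply Htu. rewrite (Hfib u); auto.
  - rewrite (lsum_one _ l v Hnd); [| apply Hl; exact H0 |].
    + destruct excluded_middle_informative; congruence.
    + intros u Hu Huv. destruct excluded_middle_informative as [Hfu|]; [|reflexivity].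
      exfalso. apply Huv, Hfib; auto. apply Hl; exact Hu.
Qed.

Lemma push_val (t : X -> R) (v : X) :
  rips_pt F t -> t v <> 0 -> push f t (f v) = t v.
Proof.
  intros Ht Hv. apply (push_val_near t v v Ht); [apply F_diag|].
  intros w Hw. apply (rips_supp_adjacent F t); auto.
Qed.

Lemma push_val_star (t : X -> R) (x v : X) :
  star F x t -> F x v -> push f t (f v) = t v.
Proof.
  intros [Ht Hx] Hxv. apply (push_val_near t x v Ht Hxv).
  intros w Hw. apply (rips_supp_adjacent F t); auto; lra.
Qed.

Lemma push_val_simplex (t : X -> R) (s : list X) (v : X) :
  rips_pt F t -> is_simplex F s -> supp_in t s -> In v s -> push f t (f v) = t v.
Proof.
  intros Ht Hs Hts Hv. apply (push_val_near t v v Ht); auto.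
Qed.

Lemma push_rips (t : X -> R) : rips_pt F t -> rips_pt (img_rel f F) (push f t).
Proof.
  intros Ht. assert (Ht' := Ht).
  destruct Ht' as [Hnn [l [Hnd [Hl [Hs Hsum]]]]]. split.
  - intro z. destruct (classic (push f t z = 0)) as [H|H]; [lra|].
    destruct (push_nz f F t z Ht H) as [v [Hv <-]].
    rewrite (push_val t v Ht Hv). apply Hnn.
  - exists (map f l). split; [|split; [|split]].
    + apply NoDup_map_NoDup_ForallPairs; auto.
      intros a b Ha Hb. apply (F_inj a); apply Hs; auto.
    + intro z. rewrite in_map_iff. split.
      * intros [v [<- Hv]]. rewrite (push_val t v Ht); apply Hl; exact Hv.
      * intro H. destruct (push_nz f F t z Ht H) as [v [Hv Hfv]].
        exists v. split; [exact Hfv | apply Hl; exact Hv].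
    + intros a b Ha Hb. apply in_map_iff in Ha, Hb.
      destruct Ha as [u [<- Hu]]; destruct Hb as [w [<- Hw]].
      exists u, w. auto.
    + rewrite map_map, <- Hsum. f_equal. apply map_ext_in.
      intros v Hv. apply push_val; auto. apply Hl; exact Hv.
Qed.

Lemma push_weak_continuous (W : (Y -> R) -> Prop) :
  weak_open (img_rel f F) W -> weak_open F (fun a => rips_pt F a /\ W (push f a)).
Proof.
  intros [_ HW]. split; [intros t [Ht _]; exact Ht|].
  intros s Hs t [Ht HWt] Hts.
  assert (Hfs : is_simplex (img_rel f F) (map f s)).
  { intros a b Ha Hb. apply in_map_iff in Ha, Hb.
    destruct Ha as [u [<- Hu]]; destruct Hb as [w [<- Hw]].
    exists u, w. auto. }
  assert (Hsupp : forall u, rips_pt F u -> supp_in u s -> supp_in (push f u) (map f s)).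
  { intros u Hu Hus z Hz. destruct (push_nz f F u z Hu Hz) as [v [Hv <-]].
    apply in_map. auto. }
  destruct (HW _ Hfs _ HWt (Hsupp t Ht Hts)) as [eps [Heps Hnear]].
  exists eps. split; [exact Heps|]. intros u Hu Hus Hclose. split; [exact Hu|].
  apply Hnear; auto; [apply push_rips; exact Hu|].
  intros z Hz. apply in_map_iff in Hz. destruct Hz as [v [<- Hv]].
  rewrite (push_val_simplex u s v), (push_val_simplex t s v); auto.
Qed.

Lemma star_fibre_disjoint (x1 x2 : X) (a : X -> R) :
  f x1 = f x2 -> star F x1 a -> star F x2 a -> x1 = x2.
Proof.
  intros Hf [Ha H1] [_ H2].
  apply (F_inj x1); auto; apply (rips_supp_adjacent F a); auto; lra.
Qed.

Lemma star_fibre_cover (a : X -> R) (y : Y) :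
  rips_pt F a -> 0 < push f a y -> exists v, f v = y /\ star F v a.
Proof.
  intros Ha Hy. destruct (push_nz f F a y Ha) as [v [Hv Hfv]]; [lra|].
  exists v. split; [exact Hfv|]. split; [exact Ha|].
  destruct Ha as [Hnn _]. specialize (Hnn v). lra.
Qed.

Lemma push_star (x : X) (a : X -> R) :
  star F x a -> star (img_rel f F) (f x) (push f a).
Proof.
  intros [Ha Hx]. split; [apply push_rips; exact Ha|].
  rewrite (push_val a x Ha); lra.
Qed.

(** [f_F] is injective on the star of [x]: coordinates off [B(x,F)] vanish
    and those on [B(x,F)] are read off the image. *)
Lemma push_star_injective (x : X) (a1 a2 : X -> R) :
  star F x a1 -> star F x a2 -> push f a1 = push f a2 -> a1 = a2.
Proof.
  intros H1 H2 Hp. extensionality v.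
  destruct (classic (F x v)) as [Hxv|Hxv].
  - rewrite <- (push_val_star a1 x v), <- (push_val_star a2 x v), Hp; auto.
  - destruct H1 as [Ha1 Hx1], H2 as [Ha2 Hx2].
    assert (Hz : forall a, rips_pt F a -> 0 < a x -> a v = 0).
    { intros a Ha Hx. apply NNPP; intro Hv.
      apply Hxv, (rips_supp_adjacent F a); auto; lra. }
    rewrite (Hz a1), (Hz a2); auto.
Qed.

(** Lifting through the ball of [x]: the vertex of [B(x,F)] over [w], and the
    point of the star of [x] with the same coordinates as [c]. *)
Definition lift_vertex (x : X) (w : Y) : X :=
  epsilon (inhabits x) (fun v => F x v /\ f v = w).

Definition lift_point (x : X) (c : Y -> R) : X -> R :=
  fun v => if excluded_middle_informative (F x v) then c (f v) else 0.

Lemma lift_vertex_spec (x : X) (w : Y) : img_rel f F (f x) w ->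
  F x (lift_vertex x w) /\ f (lift_vertex x w) = w.
Proof. intros H. unfold lift_vertex. apply epsilon_spec, F_surj, H. Qed.

Lemma lift_simplex (x : X) (s : list Y) :
  is_simplex (img_rel f F) s -> In (f x) s ->
  is_simplex F (map (lift_vertex x) s).
Proof.
  intros Hs Hx a b Ha Hb. apply in_map_iff in Ha, Hb.
  destruct Ha as [w1 [<- Hw1]]; destruct Hb as [w2 [<- Hw2]].
  destruct (lift_vertex_spec x w1) as [H1 H1']; [apply Hs; auto|].
  destruct (lift_vertex_spec x w2) as [H2 H2']; [apply Hs; auto|].
  apply (F_simp x); auto. rewrite H1', H2'. apply Hs; auto.
Qed.

Lemma lift_simplex_in (x : X) (s : list Y) (v : X) :
  is_simplex (img_rel f F) s -> In (f x) s -> F x v -> In (f v) s ->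
  In v (map (lift_vertex x) s).
Proof.
  intros Hs Hx Hv Hfv.
  destruct (lift_vertex_spec x (f v)) as [H1 H2]; [apply Hs; auto|].
  apply in_map_iff. exists (f v). split; [|exact Hfv].
  apply (F_inj x); auto.
Qed.

Lemma lift_point_vertex (x : X) (c : Y -> R) (w : Y) :
  img_rel f F (f x) w -> lift_point x c (lift_vertex x w) = c w.
Proof.
  intros Hw. destruct (lift_vertex_spec x w Hw) as [H1 H2].
  unfold lift_point. destruct excluded_middle_informative; [|contradiction].
  rewrite H2. reflexivity.
Qed.

Lemma lift_point_star (x : X) (c : Y -> R) :
  star (img_rel f F) (f x) c -> star F x (lift_point x c).
Proof.
  intros [Hc Hcx]. assert (Hc' := Hc).
  destruct Hc' as [Hnn [l [Hnd [Hl [Hs Hsum]]]]].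
  assert (Hxl : In (f x) l) by (apply Hl; lra).
  assert (Hadj : forall w, In w l -> img_rel f F (f x) w) by (intros; apply Hs; auto).
  split; [split|].
  - intro v. unfold lift_point. destruct excluded_middle_informative; [apply Hnn | lra].
  - exists (map (lift_vertex x) l). split; [|split; [|split]].
    + apply NoDup_map_NoDup_ForallPairs; auto. intros a b Ha Hb Hab.
      rewrite <- (proj2 (lift_vertex_spec x a (Hadj a Ha))),
              <- (proj2 (lift_vertex_spec x b (Hadj b Hb))), Hab.
      reflexivity.
    + intro v. split.
      * intro Hv. apply in_map_iff in Hv. destruct Hv as [w [<- Hw]].
        rewrite lift_point_vertex by (apply Hadj; exact Hw). apply Hl; exact Hw.
      * unfold lift_point. destruct excluded_middle_informative as [Hxv|]; [|lra].
        intro Hv. apply lift_simplex_in; auto. apply Hl; exact Hv.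
    + apply lift_simplex; auto.
    + rewrite map_map, <- Hsum. f_equal. apply map_ext_in. intros w Hw.
      apply lift_point_vertex, Hadj, Hw.
  - unfold lift_point. destruct excluded_middle_informative as [|Hn]; [lra|].
    exfalso. apply Hn, F_diag.
Qed.

Lemma push_lift_point (x : X) (c : Y -> R) :
  star (img_rel f F) (f x) c -> push f (lift_point x c) = c.
Proof.
  intros Hc. assert (Hl := lift_point_star x c Hc).
  extensionality z. destruct (classic (c z = 0)) as [H0|H0].
  - rewrite H0. apply NNPP; intro Hp.
    destruct (push_nz f F _ z (proj1 Hl) Hp) as [v [Hv <-]].
    unfold lift_point in Hv. destruct excluded_middle_informative; contradiction.
  - assert (Hz : img_rel f F (f x) z).
    { destruct Hc as [Hc Hcx]. apply (rips_supp_adjacent _ c); auto; lra. }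
    destruct (lift_vertex_spec x z Hz) as [H1 H2].
    rewrite <- H2 at 1. rewrite (push_val_star _ x); auto.
    apply lift_point_vertex, Hz.
Qed.

Lemma push_star_open (x : X) (W : (X -> R) -> Prop) :
  weak_open F W ->
  weak_open (img_rel f F) (fun b => exists a, W a /\ star F x a /\ push f a = b).
Proof.
  intros [_ HW]. split; [intros c [a [_ [[Ha _] <-]]]; apply push_rips, Ha|].
  intros s Hs c [a [HWa [Hxa <-]]] Hcs.
  assert (Hcx : push f a (f x) = a x) by (apply (push_val_star a x); auto).
  assert (Hxs : In (f x) s) by (apply Hcs; destruct Hxa; lra).
  (* a is supported on the lift of s, so W contains all points near a there *)
  assert (Hsupp : supp_in a (map (lift_vertex x) s)).
  { intros v Hv. destruct Hxa as [Ha Hax].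
    assert (Hxv : F x v) by (apply (rips_supp_adjacent F a); auto; lra).
    apply lift_simplex_in; auto. apply Hcs.
    rewrite (push_val_star a x v); auto. split; auto. }
  destruct (HW _ (lift_simplex x s Hs Hxs) a HWa Hsupp) as [eps [Heps Hnear]].
  exists (Rmin eps (a x)).
  assert (Hm1 := Rmin_l eps (a x)). assert (Hm2 := Rmin_r eps (a x)).
  split; [apply Rmin_glb_lt; destruct Hxa; lra|].
  intros u Hu Hus Hclose.
  assert (Hux : star (img_rel f F) (f x) u).
  { split; [exact Hu|]. assert (H := Hclose (f x) Hxs).
    apply Rabs_def2 in H. lra. }
  exists (lift_point x u).
  split; [|split; [apply lift_point_star, Hux | apply push_lift_point, Hux]].
  apply Hnear.
  - apply lift_point_star, Hux.
  - intros v Hv. unfold lift_point in Hv.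
    destruct excluded_middle_informative as [Hxv|]; [|lra].
    apply lift_simplex_in; auto.
  - intros v Hv. apply in_map_iff in Hv. destruct Hv as [w [<- Hw]].
    assert (Hxw : img_rel f F (f x) w) by (apply Hs; auto).
    destruct (lift_vertex_spec x w Hxw) as [H1 H2].
    rewrite lift_point_vertex by exact Hxw.
    rewrite <- (push_val_star a x _ Hxa H1), H2.
    eapply Rlt_le_trans; [apply Hclose; exact Hw | exact Hm1].
Qed.

(** The open star of a vertex [y] is evenly covered by the stars over [f^{-1}(y)]. *)
Theorem ball_conditions_rips_covering : rips_covering f F.
Proof.
  split; [|split]; [exact push_rips | exact push_weak_continuous|].
  intros b Hb. destruct (rips_nonempty _ b Hb) as [y Hy].
  exists (star (img_rel f F) y). split; [apply star_open|]. split; [split; auto|].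
  exists (fun S => exists x, f x = y /\ S = star F x).
  split; [|split; [|split; [|split]]].
  - intros S [x [_ ->]]. apply star_open.
  - intros S1 S2 [x1 [H1 ->]] [x2 [H2 ->]] [a [Ha1 Ha2]].
    rewrite (star_fibre_disjoint x1 x2 a); [tauto | congruence | auto | auto].
  - intros a Ha [_ Hay]. destruct (star_fibre_cover a y Ha Hay) as [v [Hv Hav]].
    exists (star F v). split; [exists v; auto | exact Hav].
  - intros S a [x [<- ->]] Ha. apply push_star, Ha.
  - intros S [x [<- ->]]. split; [|split].
    + apply push_star_injective.
    + intros c Hc. exists (lift_point x c).
      split; [apply lift_point_star, Hc | apply push_lift_point, Hc].
    + apply push_star_open.
Qed.

End EvenlyCoveringToCovering.

Theorem mainTheorem1 (X Y : Type) (UX : uniformity X) (UY : uniformity Y)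
  (f : X -> Y) (Hgen : generates UX UY f) :
  uniform_covering UX UY f <->
  is_base UX (fun E => ent UX E /\ evenly_covers f E).
Proof.
  split.
  - intros [_ [_ Hbase]]. split; [intros E [HE _]; exact HE|].
    intros G HG. destruct (Hbase G HG) as [E [[HE Hcov] HEG]].
    exists E. split; [split; [exact HE|] | exact HEG].
    apply rips_covering_evenly_covers;
      [apply (ent_sym _ UX) | apply (ent_diag _ UX) | ]; assumption.
  - intros [_ Hbase]. split; [exact Hgen|]. split; [intros E [HE _]; exact HE|].
    intros G HG. destruct (Hbase G HG) as [E [[HE HEev] HEG]].
    (* choose F evenly covering inside a square root H of E *)
    destruct (ent_half _ UX E HE) as [H [HH HHsq]].
    destruct (Hbase H HH) as [F [[HF HFev] HFH]].
    assert (Hsym : symmetric_rel F) by (apply (ent_sym _ UX); exact HF).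
    assert (Hdiag : has_diag F) by (apply (ent_diag _ UX); exact HF).
    assert (HFsq : subrel (rel_square F) E).
    { intros x z [y [Hxy Hyz]]. apply HHsq. exists y. auto. }
    exists F. split; [split; [exact HF|] | intros x y Hxy; apply HEG, HFsq; exists y; auto].
    destruct (proj1 (evenly_covers_iff f F) HFev) as [Hinj Hsurj].
    apply ball_conditions_rips_covering; auto.
    apply (evenly_covers_square_simplicial f F E); auto.
Qed.
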